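(* Let $\Omega\subset\mathbb{R}^n$ be open, let $(\alpha_i)$ be a sequence of regular monotone set functions on $\Omega$ weakly converging to a regular monotone set function $\alpha$, and let $K_j$ be a decreasing sequence of compact subsets of $\Omega$ with $K:=\bigcap_jK_j$ such that $\alpha(K)=0$. Then $$\lim_{j\to\infty}\limsup_{i\to\infty}\alpha_i(K_j)=0.$$
   Context: A set function $\alpha:\mathcal{P}(\Omega)\to[0,\infty]$ (defined on all subsets of $\Omega$) is monotone if $\alpha(E)\le\alpha(F)$ whenever $E\subset F$. A monotone $\alpha$ is regular if $\alpha(A)=\sup\{\alpha(K):K\subset A,\ K\text{ compact}\}$ for every open $A\subset\Omega$, and $\alpha(E)=\inf\{\alpha(A):E\subset A\subset\Omega,\ A\text{ open}\}$ for every $E\subset\Omega$. A sequence of regular monotone set functions $\alpha_i$ weakly converges to a monotone set function $\alpha$ if $\liminf_i\alpha_i(A)\ge\alpha(A)$ for every open $A\subset\Omega$ and $\limsup_i\alpha_i(K)\le\alpha(K)$ for every compact $K\subset\Omega$. *)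

(* R^n is modelled as 'rV[R]_n (its canonical normed topology). *)
From HB Require Import structures.
From mathcomp Require Import all_boot all_order all_algebra.
From mathcomp Require Import all_classical all_reals all_analysis.
Set Implicit Arguments. Unset Strict Implicit. Unset Printing Implicit Defensive.
Import Order.TTheory GRing.Theory Num.Theory.
Import numFieldTopology.Exports numFieldNormedType.Exports.
Local Open Scope classical_set_scope.
Local Open Scope ring_scope.
Local Open Scope ereal_scope.

Section SetFunctions.
Variables (R : realType) (n : nat).
Local Notation V := 'rV[R]_n.

(* alpha : P(Omega) -> [0, +oo], monotone; values outside P(Omega) are irrelevant *)
Definition monotone_sf (Omega : set V) (alpha : set V -> \bar R) : Prop :=
  (forall E : set V, E `<=` Omega -> 0 <= alpha E) /\
  (forall E F, E `<=` F -> F `<=` Omega -> alpha E <= alpha F).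

Definition regular_sf (Omega : set V) (alpha : set V -> \bar R) : Prop :=
  monotone_sf Omega alpha /\
  (forall A : set V, open A -> A `<=` Omega ->
     alpha A = ereal_sup (alpha @` [set K : set V | compact K /\ K `<=` A])) /\
  (forall E : set V, E `<=` Omega ->
     alpha E = ereal_inf (alpha @` [set A : set V | open A /\ E `<=` A /\ A `<=` Omega])).

Definition weakly_converges (Omega : set V) (alphas : nat -> set V -> \bar R)
    (alpha : set V -> \bar R) : Prop :=
  (forall i, regular_sf Omega (alphas i)) /\ monotone_sf Omega alpha /\
  (forall A : set V, open A -> A `<=` Omega -> alpha A <= limn_einf (fun i => alphas i A)) /\
  (forall K : set V, compact K -> K `<=` Omega -> limn_esup (fun i => alphas i K) <= alpha K).

End SetFunctions.

From HB Require Import structures.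
From mathcomp Require Import all_boot all_order all_algebra.
From mathcomp Require Import all_classical all_reals all_analysis.
Set Implicit Arguments. Unset Strict Implicit. Unset Printing Implicit Defensive.
Import Order.TTheory GRing.Theory Num.Theory.
Import numFieldTopology.Exports numFieldNormedType.Exports.
Local Open Scope classical_set_scope.
Local Open Scope ring_scope.
Local Open Scope ereal_scope.

(* Given e > 0, outer regularity gives an open A with K := \bigcap_j K_j `<=` A
   `<=` Omega and alpha(A) < e, and compactness puts K_j inside A for all large j.
   For those j, the upper bound of weak convergence on compact sets and the
   monotonicity of alpha give limsup_i alpha_i(K_j) <= alpha(K_j) <= alpha(A) < e. *)

Lemma nonincreasing_set_seq (T : Type) (K : (set T)^nat) :
  (forall j, K j.+1 `<=` K j) -> forall i j, (i <= j)%N -> K j `<=` K i.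
Proof.
move=> K_dec i j ij; rewrite -subsetEset.
by apply: (nonincreasing_seqP K).1 => // k; rewrite subsetEset.
Qed.

Lemma bigcap_compact_subset_open (T : ptopologicalType) (K : (set T)^nat)
    (A : set T) :
  compact (K 0%N) -> (forall j, closed (K j)) -> (forall j, K j.+1 `<=` K j) ->
  open A -> \bigcap_j K j `<=` A -> exists m, K m `<=` A.
Proof.
move=> K0_cpt K_closed K_dec oA KA.
(* The open sets A `|` ~` K j cover K 0; a finite subcover is dominated by its largest index. *)
have : cover_compact (K 0%N) by rewrite -compact_cover.
move=> /(_ nat setT (fun j => A `|` ~` K j)).
case=> [j _|x K0x|D _ D_cover].
- by apply: openU => //; exact: closed_openC.
- have [Ax|nAx] := pselect (A x); first by exists 0%N => //; left.
  have [j nKjx] : exists j, ~ K j x.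
    by apply: contrapT => /forallNP xK; apply/nAx/KA => j _; exact: contrapT.
  by exists j => //; right.
exists (\max_(d <- finmap.enum_fset D) d)%N => x Kx.
have Kx_le i : (i <= \max_(d <- finmap.enum_fset D) d)%N -> K i x.
  by move=> /nonincreasing_set_seq; apply.
have [d Dd [//|]] := D_cover x (Kx_le 0%N isT).
by case; apply/Kx_le/(@leq_bigmax_seq _ _ xpredT id d).
Qed.

Lemma limn_esup_le_near (R : realType) (u : (\bar R)^nat) (l : \bar R) :
  (\forall n \near \oo, u n <= l) -> limn_esup u <= l.
Proof.
move=> [m _ ul]; apply: le_trans (ereal_inf_lbound _) _.
  by exists [set j | (m <= j)%N] => //; exists m.
by apply: ge_ereal_sup => _ [j /ul ? <-].
Qed.

Lemma regular_sf_open_approx (R : realType) (n : nat) (Omega : set 'rV[R]_n)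
    (alpha : set 'rV[R]_n -> \bar R) (E : set 'rV[R]_n) (x : \bar R) :
  regular_sf Omega alpha -> E `<=` Omega -> alpha E < x ->
  exists2 A, open A /\ E `<=` A /\ A `<=` Omega & alpha A < x.
Proof.
move=> [_ [_ outer]] EO; rewrite (outer _ EO) => /ereal_inf_lt[_ [A A_nbhs <-]].
by exists A.
Qed.

Theorem proposition22 (R : realType) (n : nat) (Omega : set 'rV[R]_n)
  (alphas : nat -> set 'rV[R]_n -> \bar R) (alpha : set 'rV[R]_n -> \bar R)
  (Ks : nat -> set 'rV[R]_n) :
  open Omega ->
  (forall i, regular_sf Omega (alphas i)) ->
  regular_sf Omega alpha ->
  weakly_converges Omega alphas alpha ->
  (forall j, compact (Ks j) /\ Ks j `<=` Omega) ->
  (forall j, Ks j.+1 `<=` Ks j) ->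
  alpha (\bigcap_j Ks j) = 0 ->
  (fun j => limn_esup (fun i => alphas i (Ks j))) @ \oo --> 0.
Proof.
move=> _ alphas_reg alpha_reg [_ [[_ alpha_mono] [_ limsup_le]]] Ks_cpt Ks_dec
  alphaK0.
apply: limn_esup_le_cvg => [|j]; last first.
  apply: limf_esup_ge0 => [|i]; first exact: filter_not_empty.
  by have [[alpha_ge0 _] _] := alphas_reg i; apply/alpha_ge0/(Ks_cpt j).2.
apply/lee_addgt0Pr => e e0; rewrite add0e.
have KO : \bigcap_j Ks j `<=` Omega by move=> x /(_ 0%N I); apply: (Ks_cpt 0%N).2.
have alphaK_lt : alpha (\bigcap_j Ks j) < e%:E by rewrite alphaK0 lte_fin.
have [A [oA [KA AO]] alphaA] := regular_sf_open_approx alpha_reg KO alphaK_lt.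
have Ks_closed j : closed (Ks j).
  exact: compact_closed (@norm_hausdorff _ _) (Ks_cpt j).1.
have [m KmA] := bigcap_compact_subset_open (Ks_cpt 0%N).1 Ks_closed Ks_dec oA KA.
apply: limn_esup_le_near; exists m => // j mj.
apply: le_trans (limsup_le _ (Ks_cpt j).1 (Ks_cpt j).2) _.
apply/ltW/(le_lt_trans _ alphaA)/alpha_mono => //.
exact: subset_trans (nonincreasing_set_seq Ks_dec mj) KmA.
Qed.
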